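(* Let $\ell\ge 2$. There exist constants $C=C(\ell)$ and $c=c(\ell)>0$ such that the following holds. If $G$ is an $n$-vertex clean graph with average degree $d\ge Cn^{1/2}$, then the total weight of copies of $P_{\ell+1}^{\square}$ in $G$ is at least $c\,n\,d^{\ell+1}$.
   Context: An $n$-vertex graph $H$ with average degree $d$ is clean if for every edge $uv\in E(H)$, $u$ has at least $d/16$ neighbours $w$ in $H$ with $d_H(v,w)\ge \frac{d^2}{128n}$, where $d_H(v,w)$ is the number of common neighbours of $v,w$. A copy of $P_{\ell+1}^{\square}$ in $G$ is a tuple of distinct vertices $(x_0,\dots,x_\ell,y_0,\dots,y_\ell)$ with $x_iy_i\in E(G)$ for $0\le i\le\ell$ and $x_{i-1}x_i,\ y_{i-1}y_i\in E(G)$ for $1\le i\le \ell$. Its weight is $1/\prod_{i=1}^{\ell}\max\big(d_G(x_{i-1},y_i),\frac{d^2}{n}\big)$. *)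

From HB Require Import structures.
From mathcomp Require Import all_boot all_order all_algebra.
From mathcomp Require Import reals Rstruct.
Set Implicit Arguments. Unset Strict Implicit. Unset Printing Implicit Defensive.
Import Order.TTheory GRing.Theory Num.Theory.
Local Open Scope ring_scope.

Notation RealR := Rdefinitions.R.

Section Graph.
Variables (T : finType) (e : rel T).

Definition simple_graph : Prop := symmetric e /\ irreflexive e.

Definition deg (x : T) : nat := #|[set y | e x y]|.

Definition codeg (v w : T) : nat := #|[set z | e v z && e w z]|.

(* average degree d = (sum of degrees) / n  (= 0 when n = 0) *)
Definition avgdeg : RealR := ((\sum_(x : T) deg x)%N)%:R / (#|T|%:R).

Definition clean : Prop :=
  forall u v : T, e u v ->
    avgdeg / 16%:R <=
    (#|[set w | e u w &&
        (avgdeg ^+ 2 / (128%:R * #|T|%:R) <= (codeg v w)%:R)]|)%:R.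

(* a copy of the ladder P_{l+1}^square: (x_0..x_l, y_0..y_l) pairwise distinct,
   x_i y_i edges, x_{i-1} x_i and y_{i-1} y_i edges *)
Definition ladder_copy (l : nat) (x y : {ffun 'I_l.+1 -> T}) : bool :=
  [&& [forall i, forall j, (i != j) ==> (x i != x j)],
      [forall i, forall j, (i != j) ==> (y i != y j)],
      [forall i, forall j, x i != y j],
      [forall i, e (x i) (y i)] &
      [forall i : 'I_l, e (x (inord i)) (x (inord i.+1)) &&
                        e (y (inord i)) (y (inord i.+1))]].

Definition ladder_weight (l : nat) (x y : {ffun 'I_l.+1 -> T}) : RealR :=
  (\prod_(i < l)
     Num.max ((codeg (x (inord i)) (y (inord i.+1)))%:R : RealR)
             (avgdeg ^+ 2 / #|T|%:R)) ^-1.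

Definition total_ladder_weight (l : nat) : RealR :=
  \sum_(p : {ffun 'I_l.+1 -> T} * {ffun 'I_l.+1 -> T} | ladder_copy p.1 p.2)
     ladder_weight p.1 p.2.

End Graph.

From HB Require Import structures.
From mathcomp Require Import all_boot all_order all_algebra.
From mathcomp Require Import reals Rstruct.
From mathcomp Require Import ring lra zify.
Import Order.TTheory GRing.Theory Num.Theory.
Local Open Scope ring_scope.
Set Implicit Arguments. Unset Strict Implicit.

(* Write n = |T|, d for the average degree and D = d^2/n.
   A copy of P_{k+2}^square is obtained from a copy (x, y) of P_{k+1}^square
   by prepending a new rung (a, b) with a ~ x_0, b ~ y_0, a ~ b and a, b
   outside the 2(k+1) vertices already used; its weight is the old weight
   times 1 / max(codeg(a, y_0), D).  Cleanness of the edge x_0 y_0 provides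
   at least d/16 neighbours a of x_0 with codeg(a, y_0) >= D/128, and each
   such a admits at least codeg(a, y_0) - 2(k+1) choices of b.  When
   d >= 64 l and D >= 512 l, every good a therefore contributes at least
   1/256 and all of them together at least d/8192.  Since every prepended
   copy arises from exactly one pair (copy, rung), induction on k from the
   n d ordered edges (copies of P_1^square, of weight 1) gives total weight
   at least n d (d/8192)^k for all k <= l.  Finally d >= 64 l sqrt n
   implies both d >= 64 l and D >= 512 l, which yields the theorem with
   C = 64 l and c = 8192^-l. *)

Notation RR := Rdefinitions.R.

Lemma sum_inj_le (R : numDomainType) (I J : finType) (P : pred I) (Q : pred J)
    (f : J -> I) (F : I -> R) :
  injective f -> (forall j, Q j -> P (f j)) -> (forall i, P i -> 0 <= F i) ->
  \sum_(j | Q j) F (f j) <= \sum_(i | P i) F i.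
Proof.
move=> f_inj QP F_ge0.
have -> : \sum_(j | Q j) F (f j) = \sum_(i in [set f j | j in Q]) F i.
  by rewrite big_imset //= => j j' _ _ /f_inj.
rewrite [X in _ <= X]big_mkcond [X in X <= _]big_mkcond /=.
apply: ler_sum => i _; case: ifP => [/imsetP [j Qj ->]|_]; first by rewrite QP.
by case: ifP => // /F_ge0.
Qed.

Lemma card_setD_lb (T : finType) (A B : {set T}) : (#|A| <= #|A :\: B| + #|B|)%N.
Proof.
rewrite -{1}(cardsID B A) addnC leq_add2l.
by apply: subset_leq_card; apply: subsetIr.
Qed.

Definition fcons (U : Type) k (a : U) (x : {ffun 'I_k.+1 -> U}) : {ffun 'I_k.+2 -> U} :=
  [ffun i : 'I_k.+2 => if (i : nat) is j.+1 then x (inord j) else a].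

Lemma fconsE (U : Type) k (a : U) (x : {ffun 'I_k.+1 -> U}) m : (m < k.+2)%N ->
  fcons a x (inord m) = if m is j.+1 then x (inord j) else a.
Proof. by move=> lt_m; rewrite /fcons ffunE inordK. Qed.

Lemma fcons_inj (U : Type) k (a b : U) (x y : {ffun 'I_k.+1 -> U}) :
  fcons a x = fcons b y -> a = b /\ x = y.
Proof.
move=> E; split.
  by have := congr1 (fun f : {ffun 'I_k.+2 -> U} => f (inord 0)) E; rewrite !fconsE.
apply/ffunP => i; have lt_i : (i.+1 < k.+2)%N by rewrite ltnS ltn_ord.
have := congr1 (fun f : {ffun 'I_k.+2 -> U} => f (inord i.+1)) E.
by rewrite !fconsE // inord_val.
Qed.

Section Ladder.
Variables (T : finType) (e : rel T).

Lemma codegC (v w : T) : codeg e v w = codeg e w v.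
Proof. by apply: eq_card => z; rewrite !inE andbC. Qed.

Definition ladder_vertices k (x y : {ffun 'I_k.+1 -> T}) : {set T} :=
  [set z | z \in codom x ++ codom y].

Lemma card_ladder_vertices k (x y : {ffun 'I_k.+1 -> T}) :
  (#|ladder_vertices x y| <= (k.+1).*2)%N.
Proof.
rewrite cardsE (leq_trans (card_size _)) //.
by rewrite size_cat !size_codom card_ord -addnn.
Qed.

Lemma ladder_vertices_x k (x y : {ffun 'I_k.+1 -> T}) i : x i \in ladder_vertices x y.
Proof. by rewrite inE mem_cat codom_f. Qed.

Lemma ladder_vertices_y k (x y : {ffun 'I_k.+1 -> T}) i : y i \in ladder_vertices x y.
Proof. by rewrite inE mem_cat codom_f orbT. Qed.

Lemma fcons_ladder_copy k (x y : {ffun 'I_k.+1 -> T}) a b :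
  irreflexive e -> ladder_copy e x y ->
  e a b -> e a (x (inord 0)) -> e b (y (inord 0)) ->
  a \notin ladder_vertices x y -> b \notin ladder_vertices x y ->
  ladder_copy e (fcons a x) (fcons b y).
Proof.
move=> e_irr copy_xy ab ax0 by0 a_new b_new.
have ax i : a != x i by apply: contraNneq a_new => ->; apply: ladder_vertices_x.
have ay i : a != y i by apply: contraNneq a_new => ->; apply: ladder_vertices_y.
have bx i : b != x i by apply: contraNneq b_new => ->; apply: ladder_vertices_x.
have b_y i : b != y i by apply: contraNneq b_new => ->; apply: ladder_vertices_y.
have a_b : a != b by apply: contraTneq ab => ->; rewrite e_irr.
case/and5P: copy_xy => x_inj y_inj xy_disj rungs rails.
apply/and5P; split.
- apply/forallP => -[[|i] lt_i]; apply/forallP => -[[|j] lt_j]; apply/implyP => ij;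
    rewrite !ffunE /=; [by rewrite -val_eqE in ij | exact: ax | by rewrite eq_sym ax |].
  move/forallP: x_inj => /(_ (inord i)) /forallP /(_ (inord j)) /implyP; apply.
  by rewrite -!val_eqE /= !inordK.
- apply/forallP => -[[|i] lt_i]; apply/forallP => -[[|j] lt_j]; apply/implyP => ij;
    rewrite !ffunE /=; [by rewrite -val_eqE in ij | exact: b_y | by rewrite eq_sym b_y |].
  move/forallP: y_inj => /(_ (inord i)) /forallP /(_ (inord j)) /implyP; apply.
  by rewrite -!val_eqE /= !inordK.
- apply/forallP => -[[|i] lt_i]; apply/forallP => -[[|j] lt_j]; rewrite !ffunE /=;
    [exact: a_b | exact: ay | by rewrite eq_sym bx |].
  by move/forallP: xy_disj => /(_ (inord i)) /forallP /(_ (inord j)).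
- by apply/forallP => -[[|i] lt_i]; rewrite !ffunE //=; move/forallP: rungs.
- apply/forallP => -[[|i] lt_i]; first by rewrite /= !fconsE //= ax0 by0.
  have lt_i1 : (i.+1 < k.+2)%N by apply: ltnW.
  by rewrite /= !fconsE //; move/forallP: rails => /(_ (@Ordinal k i lt_i)).
Qed.

(* The weight factor contributed by a prepended rung (a, b) in front of
   the rung (x_0, y_0): only codeg(a, y_0) matters. *)
Definition rung_factor (a y0 : T) : RR :=
  (Num.max ((codeg e a y0)%:R : RR) (avgdeg e ^+ 2 / #|T|%:R))^-1.

Lemma rung_factor_ge0 a y0 : 0 <= rung_factor a y0.
Proof. by rewrite invr_ge0 le_max ler0n. Qed.

Lemma fcons_ladder_weight k (x y : {ffun 'I_k.+1 -> T}) a b :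
  ladder_weight e (fcons a x) (fcons b y) =
  rung_factor a (y (inord 0)) * ladder_weight e x y.
Proof.
rewrite /ladder_weight big_ord_recl invfM; congr (_^-1 * _^-1); first by rewrite !fconsE.
apply: eq_bigr => i _; have lt_i := ltn_ord i.
by rewrite lift0 !fconsE //=; lia.
Qed.

Lemma ladder_weight_ge0 k (x y : {ffun 'I_k.+1 -> T}) : 0 <= ladder_weight e x y.
Proof. by rewrite invr_ge0; apply: prodr_ge0 => i _; rewrite le_max ler0n. Qed.

Lemma card_ordered_edges :
  \sum_(p : T * T | e p.1 p.2) (1 : RR) = ((\sum_(x : T) deg e x)%N)%:R.
Proof.
rewrite -(pair_big_dep xpredT e (fun _ _ => 1)) natr_sum /=.
by apply: eq_bigr => x _; rewrite sumr_const /deg cardsE.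
Qed.

(* Copies of P_1^square are the ordered edges, each of weight 1. *)
Lemma total_ladder_weight0 :
  irreflexive e -> (0 < #|T|)%N -> #|T|%:R * avgdeg e <= total_ladder_weight e 0.
Proof.
move=> e_irr n_gt0.
have -> : #|T|%:R * avgdeg e = \sum_(p : T * T | e p.1 p.2) 1.
  by rewrite card_ordered_edges mulrC divfK // pnatr_eq0 -lt0n.
pose single (p : T * T) : {ffun 'I_1 -> T} * {ffun 'I_1 -> T} :=
  ([ffun=> p.1], [ffun=> p.2]).
apply: le_trans (@sum_inj_le _ _ _ (fun q => ladder_copy e q.1 q.2)
  (fun p => e p.1 p.2) single (fun q => ladder_weight e q.1 q.2) _ _ _);
  [apply: ler_sum => p _ | move=> [a b] [a' b'] [/ffunP/(_ ord0) + /ffunP/(_ ord0)] |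
   move=> [a b] /= ab | by move=> q _; apply: ladder_weight_ge0].
- by rewrite /ladder_weight big_ord0 invr1.
- by rewrite !ffunE => -> ->.
have a_b : a != b by apply: contraTneq ab => ->; rewrite e_irr.
apply/and5P; split; try by apply/forallP => i; apply/forallP => j;
  rewrite (ord1 i) (ord1 j) !ffunE ?eqxx.
- by apply/forallP => i; rewrite !ffunE.
- by apply/forallP => -[].
Qed.

End Ladder.

(* One good choice of a contributes at least 1/256: if b ranges over g
   common neighbours with codeg = c >= D/128 and g >= c - 2L, D >= 512 L,
   then g / max(c, D) >= 1/256. *)
Lemma good_vertex_contribution (R : realFieldType) (c g D L : R) :
  0 < D -> 512 * L <= D -> 0 <= L -> D / 128 <= c -> c <= g + 2 * L ->
  1 / 256 <= g * (Num.max c D)^-1.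
Proof.
move=> D_gt0 DL L_ge0 cD cg.
have M_gt0 : 0 < Num.max c D by rewrite lt_max D_gt0 orbT.
rewrite -[g * _]/(g / _) ler_pdivlMr //.
have : Num.max c D <= 256 * g by rewrite ge_max; apply/andP; split; lra.
lra.
Qed.

(* All good first vertices together: if at least d/16 of them exist before
   discarding at most 2L used vertices and d >= 64 L, then g survivors
   contributing 1/256 each give at least d/8192. *)
Lemma good_vertices_contribution (R : realFieldType) (d s g L : R) :
  d / 16 <= s -> s <= g + 2 * L -> 64 * L <= d -> d / 8192 <= 1 / 256 * g.
Proof. lra. Qed.

Section Extension.
Variables (T : finType) (e : rel T) (l : nat).
Hypothesis e_sym : symmetric e.
Hypothesis e_clean : clean e.
Let n : RR := #|T|%:R.
Let d : RR := avgdeg e.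
Let D : RR := d ^+ 2 / n.
Hypothesis d_large : 64 * l%:R <= d.
Hypothesis D_large : 512 * l%:R <= D.

Definition extension k (x y : {ffun 'I_k.+1 -> T}) (p : T * T) : bool :=
  [&& e p.1 p.2, e p.1 (x (inord 0)), e p.2 (y (inord 0)),
      p.1 \notin ladder_vertices x y & p.2 \notin ladder_vertices x y].

Lemma extension_sum_lb k (x y : {ffun 'I_k.+1 -> T}) :
  (k < l)%N -> ladder_copy e x y ->
  d / 8192 <= \sum_(p | extension x y p) rung_factor e p.1 (y (inord 0)).
Proof.
move=> lt_kl copy_xy; set u := x (inord 0); set v := y (inord 0).
have uv : e u v by case/and5P: copy_xy => _ _ _ /forallP rungs _; apply: rungs.
set V := ladder_vertices x y.
have card_V : (#|V|%:R : RR) <= 2 * l%:R.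
  by rewrite -natrM ler_nat mul2n (leq_trans (card_ladder_vertices x y)) ?leq_double.
have L_ge1 : 1 <= (l%:R : RR) by rewrite ler1n; lia.
have D_gt0 : 0 < D by apply: lt_le_trans D_large; lra.
have good_card := e_clean uv; rewrite -/n -/d in good_card.
set S := [set w | _] in good_card.
pose A := S :\: V.
pose B a := [set z | e a z && e v z] :\: V.
have lose_V (X : {set T}) : (#|X|%:R : RR) <= #|X :\: V|%:R + 2 * l%:R.
  by apply: le_trans (lerD (lexx _) card_V); rewrite -natrD ler_nat card_setD_lb.
apply: (@le_trans _ _ (\sum_(p | (p.1 \in A) && (p.2 \in B p.1)) rung_factor e p.1 v));
  last first.
  apply: (@sum_inj_le _ _ _ _ _ id) => [//| [a b] | p _]; last exact: rung_factor_ge0.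
  rewrite /= !inE => /andP [/andP [aV /andP [ua _]] /andP [bV /andP [ab vb]]].
  by rewrite /extension /= !inE ab aV bV (e_sym a u) ua (e_sym b v) vb.
rewrite -(pair_big_dep (fun a => a \in A) (fun a b => b \in B a)
  (fun a _ => rung_factor e a v)) /=.
apply: (@le_trans _ _ (\sum_(a in A) (1 / 256 : RR))).
  rewrite sumr_const -[_ *+ #|A|]mulr_natr.
  exact: (good_vertices_contribution good_card (lose_V S) d_large).
apply: ler_sum => a; rewrite sumr_const -[_ *+ #|B a|]mulr_natl /rung_factor !inE.
move=> /andP [_ /andP [_ codeg_av]].
apply: (good_vertex_contribution D_gt0 D_large) => //; last exact: lose_V.
rewrite codegC; apply: le_trans codeg_av.
by rewrite /D /d -mulrA [_^-1 * _]mulrC -invfM.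
Qed.

(* Every copy of P_{k+1}^square extends to copies of P_{k+2}^square of
   total weight at least d/8192 times its own, and distinct (copy, rung)
   pairs give distinct longer copies. *)
Lemma total_ladder_weight_step k : irreflexive e -> (k < l)%N ->
  d / 8192 * total_ladder_weight e k <= total_ladder_weight e k.+1.
Proof.
move=> e_irr lt_kl.
pose Copy := ({ffun 'I_k.+1 -> T} * {ffun 'I_k.+1 -> T})%type.
pose grow (j : Copy * (T * T)) := (fcons j.2.1 j.1.1, fcons j.2.2 j.1.2).
pose weight (q : {ffun 'I_k.+2 -> T} * {ffun 'I_k.+2 -> T}) := ladder_weight e q.1 q.2.
apply: le_trans (@sum_inj_le _ _ _ (fun q => ladder_copy e q.1 q.2)
  (fun j : Copy * (T * T) => ladder_copy e j.1.1 j.1.2 && extension j.1.1 j.1.2 j.2)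
  grow weight _ _ _); last first.
- by move=> q _; apply: ladder_weight_ge0.
- move=> [[x y] [a b]] /andP [/= copy_xy /and5P [ab ax by0 a_new b_new]].
  exact: fcons_ladder_copy.
- move=> [[x y] [a b]] [[x' y'] [a' b']] [] xa_eq yb_eq.
  by case: (fcons_inj xa_eq) => -> ->; case: (fcons_inj yb_eq) => -> ->.
rewrite /total_ladder_weight mulr_sumr -(pair_big_dep
  (fun q : Copy => ladder_copy e q.1 q.2) (fun q p => extension q.1 q.2 p)
  (fun q p => weight (grow (q, p)))) /=.
apply: ler_sum => -[x y] /= copy_xy.
under eq_bigr do rewrite /weight /= fcons_ladder_weight.
rewrite -mulr_suml; apply: ler_wpM2r; first exact: ladder_weight_ge0.
exact: extension_sum_lb.
Qed.

Lemma total_ladder_weight_lb k : irreflexive e -> (0 < #|T|)%N -> (k <= l)%N ->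
  n * d * (d / 8192) ^+ k <= total_ladder_weight e k.
Proof.
move=> e_irr n_gt0; elim: k => [_ | k IH lt_kl].
  by rewrite expr0 mulr1; apply: total_ladder_weight0.
apply: le_trans (total_ladder_weight_step e_irr lt_kl).
have d_ge0 : 0 <= d / 8192.
  by rewrite divr_ge0 // (le_trans _ d_large) // mulr_ge0.
by rewrite exprS mulrCA; apply: ler_wpM2l (IH (ltnW lt_kl)).
Qed.

End Extension.

Lemma degree_bounds (R : rcfType) (L n d : R) :
  1 <= L -> 1 <= n -> 64 * L * Num.sqrt n <= d ->
  64 * L <= d /\ 512 * L <= d ^+ 2 / n.
Proof.
move=> L_ge1 n_ge1 large_d.
have s_ge1 : 1 <= Num.sqrt n by rewrite -sqrtr1 ler_sqrt //; lra.
have sq_n : Num.sqrt n ^+ 2 = n by rewrite sqr_sqrtr //; lra.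
have d_ge : 64 * L <= d by nra.
split=> //; rewrite ler_pdivlMr; last by lra.
have : (64 * L * Num.sqrt n) ^+ 2 <= d ^+ 2.
  by rewrite ler_pXn2r // nnegrE; nra.
by rewrite !exprMn sq_n; nra.
Qed.

Theorem lemma5p3 (l : nat) : (2 <= l)%N ->
  exists (C c : Rdefinitions.R), 0 < c /\
    forall (T : finType) (e : rel T),
      simple_graph e -> clean e ->
      C * Num.sqrt (#|T|%:R) <= avgdeg e ->
      c * #|T|%:R * avgdeg e ^+ l.+1 <= total_ladder_weight e l.
Proof.
move=> l_ge2; exists (64 * l%:R), ((8192 : RR)^-1 ^+ l).
split=> [|T e [e_sym e_irr] e_clean large_d]; first by rewrite exprn_gt0 // invr_gt0.
have [n0 | n_gt0] := posnP #|T|.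
  by rewrite n0 mulr0 mul0r; apply: sumr_ge0 => p _; apply: ladder_weight_ge0.
have l_ge1 : 1 <= (l%:R : RR) by rewrite ler1n; lia.
have n_ge1 : 1 <= (#|T|%:R : RR) by rewrite ler1n.
have [d_large D_large] := degree_bounds l_ge1 n_ge1 large_d.
have := total_ladder_weight_lb e_sym e_clean d_large D_large e_irr n_gt0 (leqnn l).
congr (_ <= _); rewrite exprS exprMn; ring.
Qed.
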